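(* Let $d\ge1$, $K\ge2$, $n\ge1$ be integers. (i) If $(\mathbf W^\star,\mathbf H^\star)$ is an optimal solution of $\min_{\mathbf W\in\mathrm{OB}(d,K),\mathbf H\in\mathrm{OB}(d,nK)}\mathcal L_{\mathrm{HardMax}}(\mathbf W,\mathbf H)$, then $\mathbf W^\star\in\operatorname{argmax}_{\mathbf W\in\mathrm{OB}(d,K)}\rho_{\text{one-vs-rest}}(\mathbf W)$. (ii) Conversely, for every $\mathbf W^{\mathrm{SC}}\in\operatorname{argmax}_{\mathbf W\in\mathrm{OB}(d,K)}\rho_{\text{one-vs-rest}}(\mathbf W)$ there exists $\mathbf H^{\mathrm{SC}}\in\mathrm{OB}(d,nK)$ such that $(\mathbf W^{\mathrm{SC}},\mathbf H^{\mathrm{SC}})$ is an optimal solution of that minimization problem.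
   Context: $\mathrm{OB}(d,m)$ is the set of real $d\times m$ matrices with unit-norm columns. $\mathbf W\in\mathrm{OB}(d,K)$ has columns $\mathbf w_1,\dots,\mathbf w_K$; $\mathbf H\in\mathrm{OB}(d,nK)$ has columns $\mathbf h_{k,i}$, $k\in[K],i\in[n]$. $\mathcal L_{\mathrm{HardMax}}(\mathbf W,\mathbf H)=\max_{k\in[K]}\max_{i\in[n]}\max_{k'\ne k}\langle \mathbf w_{k'}-\mathbf w_k,\mathbf h_{k,i}\rangle$. For a point $\mathbf v$ and finite set $\mathcal W$, $\operatorname{dist}(\mathbf v,\mathcal W)=\inf\{\|\mathbf v-\mathbf w\|_2:\mathbf w\in\operatorname{conv}(\mathcal W)\}$, and $\rho_{\text{one-vs-rest}}(\mathbf W)=\min_{k}\operatorname{dist}(\mathbf w_k,\{\mathbf w_j\}_{j\ne k})$. *)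

From HB Require Import structures.
From mathcomp Require Import all_boot all_order all_algebra.
From mathcomp Require Import boolp classical_sets reals.
Set Implicit Arguments. Unset Strict Implicit. Unset Printing Implicit Defensive.
Import Order.TTheory GRing.Theory Num.Theory.
Local Open Scope ring_scope.
Local Open Scope classical_set_scope.

Section Defs.
Variable R : realType.

Definition dotv (d : nat) (u v : 'cV[R]_d) : R := \sum_(i < d) u i 0 * v i 0.
Definition norm2 (d : nat) (v : 'cV[R]_d) : R := Num.sqrt (dotv v v).

Definition OB_W (d K : nat) (W : 'I_K -> 'cV[R]_d) : Prop :=
  forall k, norm2 (W k) = 1.
(* H in OB(d,nK): columns h_{k,i}, k in [K], i in [n], each of unit norm *)
Definition OB_H (d K n : nat) (H : 'I_K -> 'I_n -> 'cV[R]_d) : Prop :=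
  forall k i, norm2 (H k i) = 1.

(* L_HardMax(W,H) = max_k max_i max_{k' <> k} <w_k' - w_k, h_{k,i}>
   (maximum of a finite nonempty set, written as its supremum) *)
Definition L_HardMax (d K n : nat) (W : 'I_K -> 'cV[R]_d)
    (H : 'I_K -> 'I_n -> 'cV[R]_d) : R :=
  sup [set x : R | exists k : 'I_K, exists i : 'I_n, exists k' : 'I_K,
          k' != k /\ x = dotv (W k' - W k) (H k i)].

Definition conv_rest (d K : nat) (W : 'I_K -> 'cV[R]_d) (k : 'I_K) :
    set 'cV[R]_d :=
  [set w | exists a : 'I_K -> R,
     (forall j, j != k -> 0 <= a j) /\
     \sum_(j < K | j != k) a j = 1 /\
     w = \sum_(j < K | j != k) a j *: W j].

Definition dist_rest (d K : nat) (W : 'I_K -> 'cV[R]_d) (k : 'I_K) : R :=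
  inf [set x : R | exists w, conv_rest W k w /\ x = norm2 (W k - w)].

Definition rho_ovr (d K : nat) (W : 'I_K -> 'cV[R]_d) : R :=
  inf [set x : R | exists k : 'I_K, x = dist_rest W k].

Definition HardMax_optimal (d K n : nat) (W : 'I_K -> 'cV[R]_d)
    (H : 'I_K -> 'I_n -> 'cV[R]_d) : Prop :=
  OB_W W /\ OB_H H /\
  forall (W' : 'I_K -> 'cV[R]_d) (H' : 'I_K -> 'I_n -> 'cV[R]_d), OB_W W' -> OB_H H' -> L_HardMax W H <= L_HardMax W' H'.

Definition rho_argmax (d K : nat) (W : 'I_K -> 'cV[R]_d) : Prop :=
  OB_W W /\ forall W' : 'I_K -> 'cV[R]_d, OB_W W' -> rho_ovr W' <= rho_ovr W.

End Defs.

From HB Require Import structures.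
From mathcomp Require Import all_boot all_order all_algebra.
From mathcomp Require Import all_classical all_reals all_analysis.
From mathcomp Require Import ring lra.
Import Order.TTheory GRing.Theory Num.Theory.
Import numFieldNormedType.Exports.
Set Implicit Arguments. Unset Strict Implicit.
Local Open Scope ring_scope.
Local Open Scope classical_set_scope.

(* For fixed unit classifiers [W], the best features give [min_H L(W, H) = - rho(W)].  Indeed, for
   any unit [h] attached to class [k] and any [w] in the convex hull of the other [w_j], the
   number [<w - w_k, h>] is a convex combination of margins, hence at most [L], and at least
   [- |w_k - w|]; so [L >= - rho].  Conversely, the direction from the nearest point [p] of
   that hull to [w_k] makes an obtuse angle with every [w_j - p], which bounds all margins by
   [- |w_k - p| <= - rho].  Minimising [L] over [(W, H)] is therefore maximising [rho] over [W]. *)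

Section Dot.
Variables (R : realType) (d : nat).
Implicit Types (u v w x h : 'cV[R]_d).

Lemma dotvC u v : dotv u v = dotv v u.
Proof. by apply: eq_bigr => i _; rewrite mulrC. Qed.

Lemma dotvDl u v w : dotv (u + v) w = dotv u w + dotv v w.
Proof. by rewrite /dotv -big_split; apply: eq_bigr => i _; rewrite mxE mulrDl. Qed.

Lemma dotvZl (a : R) u v : dotv (a *: u) v = a * dotv u v.
Proof. by rewrite /dotv mulr_sumr; apply: eq_bigr => i _; rewrite mxE mulrA. Qed.

Lemma dotvNl u v : dotv (- u) v = - dotv u v.
Proof. by rewrite -scaleN1r dotvZl mulN1r. Qed.

Lemma dotvBl u v w : dotv (u - v) w = dotv u w - dotv v w.
Proof. by rewrite dotvDl dotvNl. Qed.

Lemma dotvDr u v w : dotv w (u + v) = dotv w u + dotv w v.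
Proof. by rewrite dotvC dotvDl !(dotvC w). Qed.

Lemma dotvZr (a : R) u v : dotv v (a *: u) = a * dotv v u.
Proof. by rewrite dotvC dotvZl dotvC. Qed.

Lemma dotvBr u v w : dotv w (u - v) = dotv w u - dotv w v.
Proof. by rewrite dotvC dotvBl !(dotvC w). Qed.

Lemma dotv_suml (I : finType) (P : pred I) (f : I -> 'cV[R]_d) v :
  dotv (\sum_(j | P j) f j) v = \sum_(j | P j) dotv (f j) v.
Proof.
elim/big_rec2: _ => [|j y u _ <-]; last by rewrite dotvDl.
by rewrite /dotv big1 // => i _; rewrite mxE mul0r.
Qed.

Lemma dotvv_ge0 v : 0 <= dotv v v.
Proof. by apply: sumr_ge0 => i _; rewrite -expr2 sqr_ge0. Qed.

Lemma dotvv_eq0 v : dotv v v = 0 -> v = 0.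
Proof.
move=> /eqP; rewrite /dotv psumr_eq0 => [/allP v0|i _]; last by rewrite -expr2 sqr_ge0.
apply/matrixP => i j; rewrite (ord1 j) mxE.
by have := v0 i (mem_index_enum _); rewrite -expr2 sqrf_eq0 => /eqP.
Qed.

Lemma norm2_ge0 v : 0 <= norm2 v.
Proof. exact: sqrtr_ge0. Qed.

Lemma sqr_norm2 v : norm2 v ^+ 2 = dotv v v.
Proof. by rewrite /norm2 sqr_sqrtr // dotvv_ge0. Qed.

Lemma norm2N v : norm2 (- v) = norm2 v.
Proof. by rewrite /norm2 dotvNl dotvC dotvNl opprK. Qed.

Lemma norm2Z (a : R) v : norm2 (a *: v) = `|a| * norm2 v.
Proof. by rewrite /norm2 dotvZl dotvZr mulrA -expr2 sqrtrM ?sqr_ge0 // sqrtr_sqr. Qed.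

Lemma norm2_normalize v : 0 < norm2 v -> norm2 ((norm2 v)^-1 *: v) = 1.
Proof. by move=> v0; rewrite norm2Z ger0_norm ?invr_ge0 ?ltW // mulVf ?gt_eqF. Qed.

(* Expand [0 <= |x + N h|^2 = 2 N (N + <x, h>)] with [N = |x|]. *)
Lemma dotv_ge_Nnorm2 x h : norm2 h = 1 -> - norm2 x <= dotv x h.
Proof.
move=> h1; have hh : dotv h h = 1 by rewrite -sqr_norm2 h1 expr1n.
set N := norm2 x; have [Npos|] := ltP 0 N; last first.
  rewrite le_eqVlt ltNge norm2_ge0 orbF => /eqP N0.
  have /dotvv_eq0 -> : dotv x x = 0 by rewrite -sqr_norm2 -/N N0 expr0n.
  by rewrite /dotv big1 ?N0 ?oppr0 // => i _; rewrite mxE mul0r.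
have := dotvv_ge0 (x + N *: h).
rewrite !dotvDl !dotvDr !dotvZl !dotvZr hh -sqr_norm2 -/N (dotvC h x) => sq_ge0.
have : 0 <= N * (N + dotv x h) by nra.
by rewrite pmulr_rge0 //; lra.
Qed.

Lemma dotv_sqrBZ v e (t : R) :
  dotv (v - t *: e) (v - t *: e) = dotv v v - 2 * t * dotv v e + t ^+ 2 * dotv e e.
Proof. by rewrite !dotvBl !dotvBr !dotvZl !dotvZr (dotvC e v); ring. Qed.

Lemma continuous_dotvv : continuous (fun v : 'cV[R]_d => dotv v v).
Proof.
apply: (continuous_big (@add_continuous R^o)) => i _ v.
by apply: continuousM; exact: coord_continuous.
Qed.

End Dot.

Section NearestPoint.
Variables (R : realType) (d : nat).
Implicit Types (x y p q : 'cV[R]_d).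

Lemma compact_nearest (C : set 'cV[R]_d) x : compact C -> C !=set0 ->
  exists2 p, C p & forall q, C q -> dotv (x - p) (x - p) <= dotv (x - q) (x - q).
Proof.
move=> Ccompact Cn0.
have dist_cont : continuous (fun q => dotv (x - q) (x - q)).
  move=> q; apply: (@continuous_comp _ _ _ (fun q => x - q) (fun v => dotv v v)).
    by apply: continuousB; [exact: cst_continuous | exact: cvg_id].
  exact: continuous_dotvv.
have [p /set_mem Cp pmin] := compact_EVT_min Cn0 Ccompact (continuous_subspaceT dist_cont).
by exists p => // q Cq; apply: pmin; rewrite inE.
Qed.

Lemma segment_nearest_obtuse x p q :
  (forall t, 0 < t <= 1 -> dotv (x - p) (x - p) <=
     dotv (x - (p + t *: (q - p))) (x - (p + t *: (q - p)))) ->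
  dotv (x - p) (q - p) <= 0.
Proof.
set v := x - p; set e := q - p => pmin.
have small_t t : 0 < t <= 1 -> 2 * dotv v e <= t * dotv e e.
  move=> /[dup] t01 /andP[t0 _]; have := pmin t t01.
  rewrite (_ : x - (p + t *: e) = v - t *: e) ?opprD ?addrA //.
  rewrite dotv_sqrBZ => le_vv.
  have : 0 <= t * (t * dotv e e - 2 * dotv v e) by rewrite mulrBr; lra.
  by rewrite pmulr_rge0 // subr_ge0.
rewrite leNgt; apply/negP => c0.
set c := dotv v e in small_t c0; set E := dotv e e in small_t.
have E0 : 0 <= E := dotvv_ge0 e.
have t01 : 0 < c / (E + c) <= 1 by rewrite divr_gt0 ?ler_pdivrMr ?mul1r /=; lra.
have := small_t _ t01; set t := c / (E + c) in t01 *.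
have tE : t * E + t * c = c by rewrite -mulrDr /t divfK ?gt_eqF //; lra.
have : 0 < t * c by rewrite mulr_gt0 //; case/andP: t01.
lra.
Qed.

Lemma obtuse_normal_le x y p : dotv (x - p) (y - p) <= 0 -> 0 < norm2 (x - p) ->
  dotv (y - x) ((norm2 (x - p))^-1 *: (x - p)) <= - norm2 (x - p).
Proof.
set D := norm2 (x - p) => obtuse Dpos.
have -> : y - x = (y - p) - (x - p) by rewrite opprB addrA subrK.
rewrite dotvZr dotvBl -sqr_norm2 -/D (dotvC (y - p)).
rewrite -(@ler_pM2l _ D) // mulrA divff ?gt_eqF // mul1r; nra.
Qed.

End NearestPoint.

Section ConvRest.
Variables (R : realType) (d K : nat) (W : 'I_K -> 'cV[R]_d) (k : 'I_K).

Lemma conv_rest_vertex j : j != k -> conv_rest W k (W j).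
Proof.
move=> jk; exists (fun l => (l == j)%:R); split; first by move=> l _; case: (l == j).
split.
  by rewrite (bigD1 j) //= eqxx big1 ?addr0 // => l /andP[_ /negbTE ->].
by rewrite (bigD1 j) //= eqxx scale1r big1 ?addr0 // => l /andP[_ /negbTE ->]; rewrite scale0r.
Qed.

Lemma conv_rest_segment p j t : conv_rest W k p -> j != k -> 0 <= t <= 1 ->
  conv_rest W k (p + t *: (W j - p)).
Proof.
move=> [a [a0 [a1 ->]]] jk /andP[t0 t1].
exists (fun l => (1 - t) * a l + t * (l == j)%:R); split.
  by move=> l lk; rewrite addr_ge0 ?mulr_ge0 ?subr_ge0 ?a0 //; case: (l == j).
split.
  rewrite big_split /= -mulr_sumr a1 -mulr_sumr (bigD1 j) //= eqxx big1 ?addr0.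
    by rewrite !mulr1 subrK.
  by move=> l /andP[_ lj]; rewrite (negbTE lj).
set S := \sum_(l < K | l != k) a l *: W l.
under eq_bigr do rewrite scalerDl -scalerA.
rewrite big_split /= -scaler_sumr -/S.
have -> : \sum_(l < K | l != k) (t * (l == j)%:R) *: W l = t *: W j.
  rewrite (bigD1 j) //= eqxx mulr1 big1 ?addr0 // => l /andP[_ /negbTE ->].
  by rewrite mulr0 scale0r.
by rewrite scalerBr scalerBl scale1r addrCA addrC.
Qed.

Definition simplex_rest : set 'rV[R]_K :=
  [set a | (forall j, a ord0 j \in `[0, 1]%R) /\ \sum_(j < K | j != k) a ord0 j = 1].

Lemma simplex_rest_compact : compact simplex_rest.
Proof.
have -> : simplex_rest = [set a : 'rV[R]_K | forall j, `[0, 1]%classic (a ord0 j)] `&`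
    (fun a : 'rV[R]_K => \sum_(j < K | j != k) a ord0 j) @^-1` [set 1].
  by apply/seteqP; split => a [].
apply: compact_closedI.
  by apply: (@rV_compact _ _ (fun=> `[(0 : R), 1]%classic)) => j; exact: segment_compact.
apply: preimage_closed; last exact: closed_eq.
move=> a _; apply: (continuous_big (@add_continuous R^o)) => j _.
exact: coord_continuous.
Qed.

Lemma conv_rest_compact : compact (conv_rest W k).
Proof.
pose comb (a : 'rV[R]_K) := \sum_(j < K | j != k) a ord0 j *: W j.
have -> : conv_rest W k = comb @` simplex_rest.
  apply/seteqP; split => w.
    move=> [a [a0 [a1 ->]]].
    exists (\row_j (if j == k then 0 else a j)).
      split; last by rewrite -a1; apply: eq_bigr => j /negbTE jk; rewrite mxE jk.
      move=> j; rewrite mxE in_itv /=; case: eqP => [_|/eqP jk]; first by rewrite lexx ler01.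
      rewrite a0 //= -a1 (bigD1 j) //= lerDl sumr_ge0 // => l /andP[lk _].
      exact: a0.
    by apply: eq_bigr => j /negbTE jk; rewrite mxE jk.
  move=> [a [a01 a1] <-]; exists (fun j => a ord0 j); split => //.
  by move=> j _; have := a01 j; rewrite in_itv => /andP[].
apply: continuous_compact; last exact: simplex_rest_compact.
apply: continuous_subspaceT => a.
apply: (continuous_big (@add_continuous _)) => j _.
by move=> b; apply: continuousZl; exact: coord_continuous.
Qed.

Lemma nearest_conv_rest j0 : j0 != k ->
  exists2 p, conv_rest W k p & forall j, j != k -> dotv (W k - p) (W j - p) <= 0.
Proof.
move=> j0k; have [p Cp pmin] :=
  compact_nearest (W k) conv_rest_compact (ex_intro _ _ (conv_rest_vertex j0k)).
exists p => // j jk; apply: segment_nearest_obtuse => t /andP[t0 t1].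
by apply: pmin; apply: conv_rest_segment => //; rewrite ltW.
Qed.

End ConvRest.

Section HardMaxBounds.
Variables (R : realType) (d K n : nat).
Hypotheses (hK : (2 <= K)%N) (hn : (1 <= n)%N).
Implicit Types (W : 'I_K -> 'cV[R]_d) (H : 'I_K -> 'I_n -> 'cV[R]_d).

Let k0 : 'I_K := Ordinal (ltn_trans (ltnSn 0) hK).
Let k1 : 'I_K := Ordinal hK.
Let i0 : 'I_n := Ordinal hn.

Lemma exists_neq_ord (k : 'I_K) : exists j, j != k.
Proof. by case: (eqVneq k k0) => [->|kk0]; [exists k1 | exists k0; rewrite eq_sym]. Qed.

Lemma margin_le_L_HardMax W H k i k' : OB_W W -> OB_H H -> k' != k ->
  dotv (W k' - W k) (H k i) <= L_HardMax W H.
Proof.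
move=> hW hH k'k; apply: sup_upper_bound; last by exists k, i, k'.
split; first by exists (dotv (W k' - W k) (H k i)), k, i, k'.
exists 2 => _ [a [b [c [_ ->]]]]; rewrite dotvBl.
have := dotv_ge_Nnorm2 (- W c) (hH a b); rewrite norm2N hW dotvNl.
have := dotv_ge_Nnorm2 (W a) (hH a b); rewrite hW.
lra.
Qed.

Lemma L_HardMax_le W H (b : R) :
  (forall k i k', k' != k -> dotv (W k' - W k) (H k i) <= b) -> L_HardMax W H <= b.
Proof.
move=> margin_le; apply: ge_sup; first by exists (dotv (W k1 - W k0) (H k0 i0)), k0, i0, k1.
by move=> _ [k [i [k' [k'k ->]]]]; exact: margin_le.
Qed.

Lemma dist_rest_ge W k (b : R) :
  (forall w, conv_rest W k w -> b <= norm2 (W k - w)) -> b <= dist_rest W k.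
Proof.
move=> dist_ge; apply: lb_le_inf; last by move=> _ [w [Cw ->]]; exact: dist_ge.
have [j jk] := exists_neq_ord k.
by exists (norm2 (W k - W j)), (W j); split => //; exact: conv_rest_vertex.
Qed.

Lemma dist_rest_le W k w : conv_rest W k w -> dist_rest W k <= norm2 (W k - w).
Proof.
move=> Cw; apply: ge_inf; last by exists w.
by exists 0 => _ [w' [_ ->]]; exact: norm2_ge0.
Qed.

Lemma rho_ovr_le_dist W k : rho_ovr W <= dist_rest W k.
Proof.
apply: ge_inf; last by exists k.
by exists 0 => _ [k' ->]; apply: dist_rest_ge => w _; exact: norm2_ge0.
Qed.

Lemma rho_ovr_ge W (b : R) : (forall k, b <= dist_rest W k) -> b <= rho_ovr W.
Proof.
move=> dist_ge; apply: lb_le_inf; first by exists (dist_rest W k0), k0.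
by move=> _ [k ->]; exact: dist_ge.
Qed.

Lemma rho_ovr_ge0 W : 0 <= rho_ovr W.
Proof. by apply: rho_ovr_ge => k; apply: dist_rest_ge => w _; exact: norm2_ge0. Qed.

Lemma L_HardMax_ge_Nrho W H : OB_W W -> OB_H H -> - rho_ovr W <= L_HardMax W H.
Proof.
move=> hW hH; rewrite lerNl; apply: rho_ovr_ge => k; apply: dist_rest_ge.
move=> _ [a [a0 [a1 ->]]]; set w := \sum_(j < K | j != k) a j *: W j.
have wE : w - W k = \sum_(j < K | j != k) a j *: (W j - W k).
  by under [RHS]eq_bigr do rewrite scalerBr; rewrite sumrB -scaler_suml a1 scale1r.
have := dotv_ge_Nnorm2 (w - W k) (hH k i0); rewrite -norm2N opprB wE dotv_suml.
suff : \sum_(j < K | j != k) dotv (a j *: (W j - W k)) (H k i0) <= L_HardMax W H by lra.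
apply: le_trans (_ : \sum_(j < K | j != k) a j * L_HardMax W H <= _); last first.
  by rewrite -mulr_suml a1 mul1r.
apply: ler_sum => j jk; rewrite dotvZl ler_wpM2l ?a0 //.
exact: margin_le_L_HardMax.
Qed.

Lemma L_HardMax_self_le0 W : OB_W W -> L_HardMax W (fun k (_ : 'I_n) => W k) <= 0.
Proof.
move=> hW; apply: L_HardMax_le => k i k' _; rewrite dotvBl -sqr_norm2 hW expr1n.
by have := dotv_ge_Nnorm2 (- W k') (hW k); rewrite norm2N hW dotvNl subr_le0 lerN2.
Qed.

(* When [rho W = 0] the nearest point may be [w_k] itself, with no direction to normalise;
   then [h_(k,i) = w_k] already gives a loss [<= 0]. *)
Lemma exists_L_HardMax_le_Nrho W : OB_W W ->
  exists2 H : 'I_K -> 'I_n -> 'cV[R]_d, OB_H H & L_HardMax W H <= - rho_ovr W.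
Proof.
move=> hW; have [rho_pos|rho_le0] := ltP 0 (rho_ovr W); last first.
  exists (fun k (_ : 'I_n) => W k) => [k _ //|].
  by have := L_HardMax_self_le0 hW; have := rho_ovr_ge0 W; lra.
have /choice [p nearest_p] : forall k, exists p, conv_rest W k p /\
    forall j, j != k -> dotv (W k - p) (W j - p) <= 0.
  move=> k; have [j0 j0k] := exists_neq_ord k.
  by have [p Cp obtuse] := nearest_conv_rest W j0k; exists p.
have rho_le k : rho_ovr W <= norm2 (W k - p k).
  exact: le_trans (rho_ovr_le_dist W k) (dist_rest_le (nearest_p k).1).
have D_pos k : 0 < norm2 (W k - p k) by exact: lt_le_trans rho_pos (rho_le k).
exists (fun k (_ : 'I_n) => (norm2 (W k - p k))^-1 *: (W k - p k)).
  by move=> k _; exact: norm2_normalize.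
apply: L_HardMax_le => k i k' k'k.
apply: le_trans (obtuse_normal_le ((nearest_p k).2 k' k'k) (D_pos k)) _.
by rewrite lerN2.
Qed.

End HardMaxBounds.

Theorem mainTheorem3 (R : realType) (d K n : nat)
  (hd : (1 <= d)%N) (hK : (2 <= K)%N) (hn : (1 <= n)%N) :
  (forall (W : 'I_K -> 'cV[R]_d) (H : 'I_K -> 'I_n -> 'cV[R]_d),
      HardMax_optimal W H -> rho_argmax W) /\
  (forall W : 'I_K -> 'cV[R]_d, rho_argmax W ->
      exists H : 'I_K -> 'I_n -> 'cV[R]_d, OB_H H /\ HardMax_optimal W H).
Proof.
split.
  move=> W H [hW [hH H_opt]]; split => // W' hW'.
  have [H' hH' le_H'] := exists_L_HardMax_le_Nrho hK hn hW'.
  have := H_opt W' H' hW' hH'; have := L_HardMax_ge_Nrho hK hn hW hH; lra.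
move=> W [hW rho_max].
have [H hH le_H] := exists_L_HardMax_le_Nrho hK hn hW.
exists H; split => //; split => //; split => // W' H' hW' hH'.
have := rho_max W' hW'; have := L_HardMax_ge_Nrho hK hn hW' hH'; lra.
Qed.
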